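(* Let $\mathbb{X}$ be a Banach space, $\varphi:\mathbb{X}\to\mathbb{R}\cup\{+\infty\}$ a proper lower semicontinuous function, $\mathbf{S}_\varphi:=\{x\in\mathbb{X}:\varphi(x)\le0\}$, and $\bar x\in\mathbf{S}_\varphi$. (i) Suppose that $\mathbf{S}_\varphi$ has the Shapiro first order contact property around $\bar x$ and that the inequality $\varphi(x)\le0$ has a local error bound at $\bar x$. Then there exist $\tau,r\in(0,+\infty)$ such that $$\mathbf{e}\big(\{h\in\mathbb{X}:\varphi'_H(x;h)\le1\},\ \mathbf{T}^{\mathbf B}(\mathbf{S}_\varphi,x)\big)\le\tau \qquad(\ast)$$ holds for all $x\in\mathbf{S}_\varphi\cap\mathbf{B}(\bar x,r)$ with $\varphi(x)=0$. (ii) Suppose that ${\rm bd}(\mathbf{S}_\varphi)\subseteq\varphi^{-1}(0)$, that $\varphi$ has the epigraphical Shapiro first order contact property at $\bar x$, and that there exist $\tau,r\in(0,+\infty)$ such that $(\ast)$ holds for all $x\in{\rm bd}(\mathbf{S}_\varphi)\cap\mathbf{B}(\bar x,r)$. Then the inequality $\varphi(x)\le0$ has a local error bound at $\bar x$.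
   Context: $\mathbf{B}(a,\delta)$ is the open ball with center $a$ and radius $\delta$; ${\rm bd}$ denotes boundary; $\mathbf{d}(x,D):=\inf\{\|x-y\|:y\in D\}$. Excess: for $C,D\subseteq\mathbb{X}$, $\mathbf{e}(C,D):=\sup_{x\in C}\mathbf{d}(x,D)$, with $\mathbf{e}(\emptyset,D)=0$ if $D\ne\emptyset$ and $=\infty$ otherwise. Lower Hadamard directional derivative: $\varphi'_H(x;h):=\liminf_{t\to0^+,\,h'\to h}\frac{\varphi(x+th')-\varphi(x)}{t}$. For a closed set $C$ and $c\in C$, the Bouligand tangent cone $\mathbf{T}^{\mathbf B}(C,c)$ is the set of all $v$ for which there exist $v_n\to v$, $t_n\downarrow0$ with $c+t_nv_n\in C$ for all $n$. A closed set $C$ has the Shapiro first order contact property at $a\in C$ if for every $\varepsilon>0$ there is $\delta>0$ with $\mathbf{d}(x-u,\mathbf{T}^{\mathbf B}(C,u))\le\varepsilon\|x-u\|$ for all $x,u\in C\cap\mathbf{B}(a,\delta)$; it has this property around $\bar x$ if there is a neighborhood $U$ of $\bar x$ such that it has the property at every point of $C\cap U$. $\varphi$ has the epigraphical Shapiro first order contact property at $\bar x\in{\rm dom}\,\varphi$ if ${\rm epi}(\varphi)=\{(x,\alpha)\in\mathbb{X}\times\mathbb{R}:\varphi(x)\le\alpha\}$ (with norm $\|(x,\alpha)\|=\|x\|+|\alpha|$) has the Shapiro first order contact property at $(\bar x,\varphi(\bar x))$. The inequality $\varphi(x)\le0$ has a local error bound at $\bar x\in\mathbf{S}_\varphi$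 if there exist $\tau,\delta\in(0,+\infty)$ with $\mathbf{d}(x,\mathbf{S}_\varphi)\le\tau\max\{\varphi(x),0\}$ for all $x\in\mathbf{B}(\bar x,\delta)$. *)

From HB Require Import structures.
From mathcomp Require Import all_boot all_order all_algebra.
From mathcomp Require Import all_classical all_reals all_analysis.
Set Implicit Arguments. Unset Strict Implicit. Unset Printing Implicit Defensive.
Import Order.TTheory GRing.Theory Num.Theory.
Import numFieldNormedType.Exports.
Local Open Scope classical_set_scope.
Local Open Scope ring_scope.

Section Defs.
Variable R : realType.

Definition sublevel {X : Type} (phi : X -> \bar R) : set X :=
  [set x | (phi x <= 0)%E].

Definition proper_fun {X : Type} (phi : X -> \bar R) : Prop :=
  (exists x, (phi x < +oo)%E) /\ (forall x, phi x <> -oo%E).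

(* distance with respect to a given norm N; d(x, set0) = +oo *)
Definition dist_N {V : zmodType} (N : V -> R) (x : V) (D : set V) : \bar R :=
  ereal_inf [set (N (x - y))%:E | y in D].

Definition dist {V : normedModType R} (x : V) (D : set V) : \bar R :=
  dist_N (fun v => `|v|) x D.

Definition excess {V : normedModType R} (C D : set V) : \bar R :=
  if `[< C = set0 >] then (if `[< D = set0 >] then +oo%E else 0%E)
  else ereal_sup [set dist x D | x in C].

Definition bouligand {V : normedModType R} (C : set V) (c : V) : set V :=
  [set v | exists (vn : nat -> V) (tn : nat -> R),
     vn @ \oo --> v /\ tn @ \oo --> (0 : R) /\ (forall n, 0 < tn n) /\
     (forall n, C (c + tn n *: vn n))].

Definition shapiro_at_N {V : normedModType R} (N : V -> R) (C : set V) (a : V)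
  : Prop :=
  forall eps : R, 0 < eps -> exists2 delta : R, 0 < delta &
    forall x u, C x -> C u -> N (x - a) < delta -> N (u - a) < delta ->
      (dist_N N (x - u) (bouligand C u) <= (eps * N (x - u))%:E)%E.

Definition shapiro_at {V : normedModType R} (C : set V) (a : V) : Prop :=
  shapiro_at_N (fun v => `|v|) C a.

Definition shapiro_around {V : normedModType R} (C : set V) (xb : V) : Prop :=
  exists2 U, nbhs xb U & forall a, C a -> U a -> shapiro_at C a.

Definition epi {X : normedModType R} (phi : X -> \bar R) : set (X * R) :=
  [set p | (phi p.1 <= p.2%:E)%E].

Definition epi_shapiro_at {X : normedModType R} (phi : X -> \bar R) (xb : X)
  : Prop :=
  shapiro_at_N (fun p : X * R => `|p.1| + `|p.2|) (epi phi) (xb, fine (phi xb)).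

(* lower Hadamard directional derivative:
   liminf_{t -> 0+, h' -> h} (phi(x + t h') - phi(x)) / t *)
Definition hadamard_lower {X : normedModType R} (phi : X -> \bar R) (x h : X)
  : \bar R :=
  ereal_sup [set ereal_inf
     [set q | exists t k, 0 < t < delta /\ `|k - h| < delta /\
                q = ((phi (x + t *: k)%R - phi x) * (t^-1)%:E)%E]
   | delta in [set d : R | 0 < d]].

Definition local_error_bound {X : normedModType R} (phi : X -> \bar R) (xb : X)
  : Prop :=
  exists tau delta : R, 0 < tau /\ 0 < delta /\
    forall x, ball xb delta x ->
      (dist x (sublevel phi) <= tau%:E * maxe (phi x) 0)%E.

Definition bd {X : topologicalType} (A : set X) : set X :=
  closure A `\` interior A.

Definition star_estimate {X : normedModType R} (phi : X -> \bar R) (tau : R)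
  (x : X) : Prop :=
  (excess [set h | (hadamard_lower phi x h <= 1)%E]
          (bouligand (sublevel phi) x) <= tau%:E)%E.

End Defs.

From HB Require Import structures.
From mathcomp Require Import all_boot all_order all_algebra.
From mathcomp Require Import all_classical all_reals all_analysis.
From mathcomp Require Import lra.
Set Implicit Arguments. Unset Strict Implicit. Unset Printing Implicit Defensive.
Import Order.TTheory GRing.Theory Num.Theory.
Import numFieldNormedType.Exports.
Local Open Scope classical_set_scope.
Local Open Scope ring_scope.

(* (i) If [phi'(x; h) <= 1] at a zero [x] of [phi], there are points [x + t k]
   with [k] close to [h] and [phi (x + t k) <= (1 + eps) t].  The error bound
   puts a point of [S_phi] within about [tau t] of [x + t k], and the first
   order contact property at [x] turns its displacement from [x] into a
   tangent vector; rescaling by [t] gives a tangent vector within about [tau]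
   of [h].
   (ii) For [y] outside [S_phi] near [xb], Ekeland's principle applied to
   [z |-> |y - z|] on [S_phi] gives a point [w], necessarily on the boundary,
   with [|y - w| <= |y - w - v| + eta |v|] for every tangent vector [v] at
   [w].  The contact property of the epigraph at [(xb, 0)] gives a tangent
   vector [(h, b)] at [(w, 0)] close to [(y - w, phi y)]; [(h, b)] rescaled by
   about [phi y] is admissible in (star) at [w], which produces [v] with
   [|y - w| <= 3 (tau + 1) phi y]. *)

Section Ekeland.
Variables (R : realType) (X : completeNormedModType R).
Variables (S : set X) (g : X -> R) (eta : R).
Hypotheses (S_closed : closed S) (g_cont : continuous g).
Hypotheses (g_ge0 : forall z, 0 <= g z) (eta_gt0 : 0 < eta).

Definition descent_set (u : X) : set X :=
  [set z | S z /\ g z + eta * `|z - u| <= g u].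

Lemma descent_set_refl u : S u -> descent_set u u.
Proof. by move=> Su; split => //; rewrite subrr normr0 mulr0 addr0. Qed.

Lemma descent_set_trans a b c :
  descent_set a b -> descent_set b c -> descent_set a c.
Proof.
move=> [_ gab] [Sc gbc]; split => //.
have := ler_wpM2l (ltW eta_gt0) (ler_distD b c a); rewrite mulrDr.
lra.
Qed.

Lemma descent_set_near_inf u e : S u -> 0 < e ->
  exists2 z, descent_set u z & forall x, descent_set u x -> g z <= g x + e.
Proof.
move=> Su e0; have hinf : has_inf (g @` descent_set u).
  split; first by exists (g u), u => //; exact: descent_set_refl.
  by exists 0 => _ [x _ <-].
have [_ [z Dz <-] gz] := inf_adherent e0 hinf.
exists z => // x Dx; apply: (le_trans (ltW gz)); rewrite lerD2r.
by apply: ge_inf; [exact: hinf.2 | exists x].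
Qed.

Lemma ekeland_sequence z0 : S z0 -> exists u : nat -> X, u 0%N = z0 /\
  forall n, descent_set (u n) (u n.+1) /\
    forall x, descent_set (u n) x -> g (u n.+1) <= g x + n.+1%:R^-1.
Proof.
move=> Sz0; have step (p : X * nat) : exists z, S p.1 ->
    descent_set p.1 z /\ forall x, descent_set p.1 x -> g z <= g x + p.2.+1%:R^-1.
  have [Su|nSu] := pselect (S p.1); last by exists p.1.
  have e0 : 0 < p.2.+1%:R^-1 :> R by rewrite invr_gt0.
  by have [z Dz zmin] := descent_set_near_inf Su e0; exists z.
have [f Hf] := choice step.
pose u := fix u n := if n is m.+1 then f (u m, m) else z0.
have Su n : S (u n) by elim: n => [//|n IH]; exact: ((Hf (u n, n)) IH).1.1.
by exists u; split => // n; exact: (Hf (u n, n)) (Su n).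
Qed.

Section Limit.
Variable u : nat -> X.
Hypothesis u_step : forall n, descent_set (u n) (u n.+1) /\
  forall x, descent_set (u n) x -> g (u n.+1) <= g x + n.+1%:R^-1.
Hypothesis S_u0 : S (u 0%N).

Lemma ekeland_sequence_in n : S (u n).
Proof. by case: n => [//|n]; exact: (u_step n).1.1. Qed.

Lemma descent_set_seq n m : (n <= m)%N -> descent_set (u n) (u m).
Proof.
have Sun := ekeland_sequence_in n; elim: m => [|m IH].
  by rewrite leqn0 => /eqP <-; exact: descent_set_refl.
rewrite leq_eqVlt => /orP [/eqP <-|]; first exact: descent_set_refl.
by rewrite ltnS => /IH Dm; exact: descent_set_trans Dm (u_step m).1.
Qed.

(* [u n.+1] nearly minimises [g] on [descent_set (u n)], which contains
   [descent_set (u n.+1)]; so the latter shrinks. *)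
Lemma descent_set_seq_small n x :
  descent_set (u n.+1) x -> eta * `|x - u n.+1| <= n.+1%:R^-1.
Proof.
move=> Dx; have := (u_step n).2 x (descent_set_trans (u_step n).1 Dx).
by case: Dx => _; set e := n.+1%:R^-1; lra.
Qed.

Lemma descent_set_seq_ball e : 0 < e ->
  exists N, forall x, descent_set (u N.+1) x -> `|x - u N.+1| < e.
Proof.
move=> e0; have [N _ /(_ N (leqnn N)) NE] :=
  near_infty_natSinv_lt (PosNum (mulr_gt0 eta_gt0 e0)).
exists N => x /descent_set_seq_small Dx.
by rewrite -(ltr_pM2l eta_gt0); exact: le_lt_trans Dx NE.
Qed.

Lemma ekeland_sequence_cvg : cvgn u.
Proof.
apply/cauchy_cvgP/cauchy_exP => e e0.
have [N HN] := descent_set_seq_ball e0; exists (u N.+1), N.+1 => // m Nm.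
by rewrite /= -ball_normE /ball_ /= distrC; apply/HN/descent_set_seq.
Qed.

Lemma descent_set_seq_lim n : descent_set (u n) (limn u).
Proof.
have cvu := ekeland_sequence_cvg; split.
  apply: (closed_cvg S S_closed _ _ cvu).
  by exists 0%N => // m _; exact: ekeland_sequence_in.
have gcvg : (fun m => g (u m) + eta * `|u m - u n|) @ \oo -->
    g (limn u) + eta * `|limn u - u n|.
  apply: cvgD; first by apply: continuous_cvg => //; exact: g_cont.
  by apply: cvgMr; apply: cvg_norm; apply: cvgB => //; exact: cvg_cst.
apply: (closed_cvg [set x | x <= g (u n)] (@closed_le _ _) _ _ gcvg).
by exists n => // m nm; exact: (descent_set_seq nm).2.
Qed.

Lemma ekeland_sequence_lim_min z : S z ->
  g (limn u) <= g z + eta * `|z - limn u|.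
Proof.
move=> Sz; set w := limn u.
have [//|lt] := leP (g w) (g z + eta * `|z - w|).
have Dz n : descent_set (u n) z.
  exact: descent_set_trans (descent_set_seq_lim n) (conj Sz (ltW lt)).
have [zw|zw] := eqVneq z w.
  by move: lt; rewrite zw subrr normr0 mulr0 addr0 ltxx.
have zw2 : 0 < `|z - w| / 2 by rewrite divr_gt0 // normr_gt0 subr_eq0.
have [N HN] := descent_set_seq_ball zw2.
have := HN z (Dz _); have := HN w (descent_set_seq_lim _).
have := ler_distD (u N.+1) z w; rewrite [`|w - u N.+1|]distrC.
lra.
Qed.

End Limit.

Theorem ekeland_variational_principle z0 : S z0 ->
  exists2 w, S w & g w <= g z0 /\ forall z, S z -> g w <= g z + eta * `|z - w|.
Proof.
move=> Sz0; have [u [u0 ustep]] := ekeland_sequence Sz0.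
have Su0 : S (u 0%N) by rewrite u0.
have [Sw gw] := descent_set_seq_lim ustep Su0 0.
exists (limn u) => //; split; last exact: ekeland_sequence_lim_min.
by rewrite -u0; apply: le_trans gw; rewrite lerDl mulr_ge0 // ltW.
Qed.

End Ekeland.

Section TangentCone.
Variable R : realType.

Lemma dist_N_le {V : zmodType} (N : V -> R) (x y : V) (D : set V) :
  D y -> (dist_N N x D <= (N (x - y))%:E)%E.
Proof. by move=> Dy; apply: ereal_inf_lbound; exists y. Qed.

Lemma dist_le {V : normedModType R} (x y : V) (D : set V) :
  D y -> (dist x D <= (`|x - y|)%:E)%E.
Proof. exact: dist_N_le. Qed.

Lemma dist_N_lt_ex {V : zmodType} (N : V -> R) (x : V) (D : set V) (r : R) :
  (dist_N N x D < r%:E)%E -> exists2 y, D y & N (x - y) < r.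
Proof. by move=> /ereal_inf_lt [_ [y Dy <-]]; rewrite lte_fin; exists y. Qed.

Lemma dist_le_excess {V : normedModType R} (C D : set V) (x : V) :
  C x -> (dist x D <= excess C D)%E.
Proof.
move=> Cx; rewrite /excess asboolF; last by move=> C0; rewrite C0 in Cx.
by apply: ereal_sup_ubound; exists x.
Qed.

Lemma excess_le {V : normedModType R} (C D : set V) (a : R) :
  D !=set0 -> 0 <= a -> (forall x, C x -> (dist x D <= a%:E)%E) ->
  (excess C D <= a%:E)%E.
Proof.
move=> [d Dd] a0 Ca; rewrite /excess.
have [->|C0] := pselect (C = set0).
  by rewrite asboolT // asboolF ?lee_fin // => D0; rewrite D0 in Dd.
by rewrite asboolF //; apply: ge_ereal_sup => _ [x Cx <-]; exact: Ca.
Qed.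

Lemma bouligand0 {V : normedModType R} (C : set V) (c : V) :
  C c -> bouligand C c 0.
Proof.
move=> Cc; exists (fun _ => 0), (fun n => n.+1%:R^-1); split; first exact: cvg_cst.
split; first exact: cvg_harmonic.
by split => n; [rewrite invr_gt0 ltr0Sn | rewrite scaler0 addr0].
Qed.

Lemma bouligandZ {V : normedModType R} (C : set V) (c v : V) (k : R) :
  0 < k -> bouligand C c v -> bouligand C c (k *: v).
Proof.
move=> k0 [vn [tn [vcvg [tcvg [t0 Cn]]]]].
exists (fun n => k *: vn n), (fun n => tn n / k); split.
  by apply: cvgZ => //; exact: cvg_cst.
split; first by have := cvgM tcvg (cvg_cst k^-1); rewrite mul0r; apply.
by split => n; [rewrite divr_gt0 | rewrite scalerA divfK ?gt_eqF].
Qed.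

Lemma shapiro_at_N_ex {V : normedModType R} (N : V -> R) (C : set V) (a : V)
    (eps : R) : shapiro_at_N N C a -> 0 < eps ->
  exists2 delta, 0 < delta & forall x u s, C x -> C u ->
    N (x - a) < delta -> N (u - a) < delta -> 0 < s ->
    exists2 v, bouligand C u v & N (x - u - v) < eps * N (x - u) + s.
Proof.
move=> shC eps0; have [delta delta0 Hd] := shC eps eps0.
exists delta => // x u s Cx Cu xa ua s0; apply: dist_N_lt_ex.
by apply: le_lt_trans (Hd x u Cx Cu xa ua) _; rewrite lte_fin ltrDl.
Qed.

(* Along a tangent direction [v] at [w] one can move from [w] inside [S]; the
   Ekeland inequality at the nearby points passes to the limit. *)
Lemma ekeland_point_bouligand {V : normedModType R} (S : set V) (y w v : V)
    (eta : R) : 0 <= eta ->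
  (forall z, S z -> `|y - w| <= `|y - z| + eta * `|z - w|) ->
  bouligand S w v -> `|y - w| <= `|y - w - v| + eta * `|v|.
Proof.
move=> eta0 ek [vn [tn [vcvg [tcvg [t0 Sn]]]]].
have step n : tn n <= 1 -> `|y - w| <= `|y - w - vn n| + eta * `|vn n|.
  move=> t1; have := ek _ (Sn n).
  have -> : y - (w + tn n *: vn n) =
      (1 - tn n) *: (y - w) + tn n *: (y - w - vn n).
    rewrite scalerBl scale1r [tn n *: (y - w - vn n)]scalerBr addrA subrK.
    by rewrite opprD addrA.
  rewrite [w + _]addrC addrK normrZ gtr0_norm //.
  have := ler_normD ((1 - tn n) *: (y - w)) (tn n *: (y - w - vn n)).
  rewrite !normrZ (ger0_norm (_ : 0 <= 1 - tn n)) ?subr_ge0 // (gtr0_norm (t0 n)).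
  move=> tri ekn; rewrite -(ler_pM2l (t0 n)) mulrDr mulrCA.
  by move: ekn tri; rewrite mulrBl mul1r; lra.
have lim : (fun n => `|y - w - vn n| + eta * `|vn n|) @ \oo -->
    `|y - w - v| + eta * `|v|.
  apply: cvgD; first by apply: cvg_norm; apply: cvgB => //; exact: cvg_cst.
  by apply: cvgM; [exact: cvg_cst | exact: cvg_norm].
apply: (closed_cvg [set x : R | `|y - w| <= x] (@closed_ge _ _) _ _ lim).
have /cvgrPdist_lt/(_ 1 ltr01) := tcvg; apply: filterS => n.
by rewrite sub0r normrN => /ltW t1; exact: step (le_trans (ler_norm _) t1).
Qed.

(* Moving from [w] towards [y] by [s (y - w)] gains [s |y - w|] in distance
   to [y] but only costs [eta s |y - w|] in the Ekeland inequality. *)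
Lemma ekeland_point_bd {V : normedModType R} (S : set V) (y w : V) (eta : R) :
  eta < 1 -> S w -> ~ S y ->
  (forall z, S z -> `|y - w| <= `|y - z| + eta * `|z - w|) -> bd S w.
Proof.
move=> eta1 Sw nSy ek; split; first exact: subset_closure.
move=> /nbhs_ballP [e e0 Se]; set L := `|y - w|.
have L0 : 0 < L by rewrite normr_gt0 subr_eq0; apply/eqP => yw; apply: nSy; rewrite yw.
set s := Num.min 1 (e / (2 * L)).
have s0 : 0 < s by rewrite lt_min ltr01 divr_gt0 // mulr_gt0.
have s1 : s <= 1 by rewrite ge_min lexx.
have sL : s * L < e.
  have : s <= e / (2 * L) by rewrite ge_min lexx orbT.
  by rewrite ler_pdivlMr ?mulr_gt0 //; have := mulr_gt0 s0 L0; lra.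
have Sz : S (w + s *: (y - w)).
  apply: Se; rewrite -ball_normE /ball_ /= opprD addrA subrr add0r normrN.
  by rewrite normrZ gtr0_norm.
have := ek _ Sz.
have -> : y - (w + s *: (y - w)) = (1 - s) *: (y - w).
  by rewrite scalerBl scale1r opprD addrA.
rewrite [w + _]addrC addrK !normrZ (gtr0_norm s0) ger0_norm ?subr_ge0 // -/L.
have : eta * (s * L) < s * L by rewrite gtr_pMl // mulr_gt0.
lra.
Qed.

End TangentCone.

Section Hadamard.
Variables (R : realType) (X : normedModType R).
Implicit Types (phi : X -> \bar R) (x h : X).

Lemma hadamard_lower_lt_ex phi x h (z a d : R) :
  phi x = z%:E -> (hadamard_lower phi x h < a%:E)%E -> 0 < d ->
  exists t k, [/\ 0 < t < d, `|k - h| < d & (phi (x + t *: k)%R < (z + a * t)%:E)%E].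
Proof.
move=> px ha d0.
have : (ereal_inf [set q | exists (t : R) k, (0 < t < d)%R /\
    (`|k - h| < d)%R /\ q = ((phi (x + t *: k)%R - phi x) * t^-1%:E)%E]
    < a%:E)%E.
  by apply: le_lt_trans ha; apply: ereal_sup_ubound; exists d.
move=> /ereal_inf_lt [_ [t [k [/andP [t0 td] [kh ->]]]]].
rewrite px lte_pdivrMr // lteBlDl // -EFinM -EFinD => lt.
by exists t, k; split => //; apply/andP.
Qed.

Lemma hadamard_lower_le_epi_tangent phi (w h : X) (z b : R) :
  phi w = z%:E -> bouligand (epi phi) (w, z) (h, b) ->
  (hadamard_lower phi w h <= b%:E)%E.
Proof.
move=> pw [p [t [pcvg [tcvg [t0 Ep]]]]].
have p1cvg : (fun n => (p n).1) @ \oo --> h.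
  by apply: (cvg_comp _ _ pcvg); exact: cvg_fst.
have p2cvg : (fun n => (p n).2) @ \oo --> b.
  by apply: (cvg_comp _ _ pcvg); exact: cvg_snd.
apply: ge_ereal_sup => _ [d d0 <-]; apply/lee_addgt0Pr => e e0.
have [n [tn [p1n p2n]]] := filter_ex (filterI ((cvgrPdist_lt _ _).1 tcvg d d0)
  (filterI ((cvgrPdist_lt _ _).1 p1cvg d d0) ((cvgrPdist_lt _ _).1 p2cvg e e0))).
move: tn; rewrite sub0r normrN gtr0_norm // => tn.
apply: (@le_trans _ _ ((phi (w + t n *: (p n).1)%R - phi w) * (t n)^-1%:E)%E).
  apply: ereal_inf_lbound; exists (t n), (p n).1.
  by split; [apply/andP | split; rewrite // distrC].
rewrite pw lee_pdivrMr // leeBlDl // -EFinD.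
apply: le_trans (Ep n) _; rewrite /= lee_fin lerD2l mulrC.
apply: ler_wpM2l; first exact: ltW.
by move: p2n; rewrite ltr_distlC => /andP [_ /ltW].
Qed.

End Hadamard.

Section ContactToEstimate.
Variables (R : realType) (X : normedModType R).

Lemma dist_bouligand_le_of_approx (C : set X) (x h k u v : X) (t eps r : R) :
  0 < t -> 0 <= eps -> bouligand C x v -> `|h - k| <= eps ->
  `|x + t *: k - u| <= r * t -> `|u - x - v| <= eps * `|u - x| + eps * t ->
  (dist h (bouligand C x) <= (r + eps * (2 + `|k| + r))%:E)%E.
Proof.
move=> t0 eps0 Tv hk xku uxv.
have Tv' : bouligand C x (t^-1 *: v) by apply: bouligandZ; rewrite ?invr_gt0.
apply: le_trans (dist_le h Tv') _; rewrite lee_fin -(ler_pM2l t0).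
have tv : t *: h - v = t *: (h - t^-1 *: v).
  by rewrite scalerBr scalerA mulfV ?gt_eqF // scale1r.
have -> : t * `|h - t^-1 *: v| = `|t *: h - v| by rewrite tv normrZ gtr0_norm.
have ux : `|u - x| <= t * `|k| + r * t.
  have := ler_distD (x + t *: k) u x.
  rewrite [`|u - (x + _)|]distrC [x + _ - x]addrC addKr normrZ gtr0_norm //; lra.
have := ler_distD (t *: k) (t *: h) v; have := ler_distD (u - x) (t *: k) v.
rewrite -scalerBr normrZ gtr0_norm // opprB addrA [t *: k + x]addrC.
have := ler_wpM2l (ltW t0) hk; have := ler_wpM2l eps0 ux.
by move: uxv; lra.
Qed.

Lemma dist_bouligand_le_of_hadamard (phi : X -> \bar R) (x h : X) (tau rho : R) :
  0 < tau -> 0 < rho -> sublevel phi x -> phi x = 0%E ->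
  shapiro_at (sublevel phi) x ->
  (forall z, ball x rho z -> (dist z (sublevel phi) <= tau%:E * maxe (phi z) 0)%E) ->
  (hadamard_lower phi x h <= 1)%E ->
  (dist h (bouligand (sublevel phi) x) <= tau%:E)%E.
Proof.
move=> tau0 rho0 Sx phix0 shx eb hh; set S := sublevel phi.
set Q := `|h| + 2 * tau + 2; set M := tau + Q + 3.
have Q0 : 0 < Q by rewrite /Q; have := normr_ge0 h; lra.
have M0 : 0 < M by rewrite /M; lra.
apply/lee_addgt0Pr => e e0; set eps := Num.min 1 (e / M).
have eps0 : 0 < eps by rewrite lt_min ltr01 divr_gt0.
have eps1 : eps <= 1 by rewrite ge_min lexx.
have epsM : eps * M <= e by rewrite -ler_pdivlMr // ge_min lexx orbT.
have [delta delta0 shap] := shapiro_at_N_ex shx eps0.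
set d := Num.min eps (Num.min rho delta / Q).
have d0 : 0 < d by rewrite lt_min eps0 divr_gt0 // lt_min rho0 delta0.
have dQ : d * Q <= Num.min rho delta by rewrite -ler_pdivlMr // ge_min lexx orbT.
have hh' : (hadamard_lower phi x h < (1 + eps)%:E)%E.
  by apply: le_lt_trans hh _; rewrite lte_fin ltrDl.
have [t [k [/andP [t0 td] kh phik]]] := hadamard_lower_lt_ex phix0 hh' d0.
rewrite add0r in phik.
have hk : `|h - k| <= eps by rewrite distrC ltW // (lt_le_trans kh) // ge_min lexx.
have tQ : t * Q < Num.min rho delta by apply: lt_le_trans dQ; rewrite ltr_pM2r.
set r := tau * (1 + eps) + eps.
have r0 : 0 < r by rewrite addr_gt0 // mulr_gt0 // addr_gt0.
have kQ : `|k| + r <= Q.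
  have := ler_normD (k - h) h; rewrite subrK.
  by have := ler_wpM2l (ltW tau0) eps1; rewrite /r /Q distrC; lra.
have tkQ : t * `|k| + r * t <= t * Q.
  by have := ler_wpM2l (ltW t0) kQ; rewrite mulrDr [t * r]mulrC.
have xtk : ball x rho (x + t *: k).
  rewrite -ball_normE /ball_ /= opprD addrA subrr add0r normrN normrZ gtr0_norm //.
  have : t * Q < rho by apply: lt_le_trans tQ _; rewrite ge_min lexx.
  by have := mulr_gt0 r0 t0; lra.
have : (dist (x + t *: k)%R S < (r * t)%:E)%E.
  apply: le_lt_trans (eb _ xtk) _.
  apply: (@le_lt_trans _ _ (tau * ((1 + eps) * t))%:E).
    rewrite EFinM lee_wpmul2l ?lee_fin ?(ltW tau0) // ge_max (ltW phik) lee_fin.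
    by rewrite mulr_ge0 ?(ltW t0) //; lra.
  by rewrite lte_fin /r; have := mulr_gt0 eps0 t0; lra.
move=> /dist_N_lt_ex [u Su /ltW xku].
have ux : `|u - x| < delta.
  have := ler_distD (x + t *: k) u x.
  rewrite [`|u - (x + _)|]distrC [x + _ - x]addrC addKr normrZ gtr0_norm //.
  have : t * Q < delta by apply: lt_le_trans tQ _; rewrite ge_min lexx orbT.
  lra.
have xx : `|x - x| < delta by rewrite subrr normr0.
have [v Tv /ltW uxv] := shap u x (eps * t) Su Sx ux xx (mulr_gt0 eps0 t0).
apply: le_trans (dist_bouligand_le_of_approx t0 (ltW eps0) Tv hk xku uxv) _.
rewrite -EFinD lee_fin; have rE : r = tau * (1 + eps) + eps by [].
by have := ler_wpM2l (ltW eps0) kQ; move: epsM; rewrite /M; lra.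
Qed.

Lemma star_estimate_of_error_bound (phi : X -> \bar R) (x : X) (tau rho : R) :
  0 < tau -> 0 < rho -> sublevel phi x -> phi x = 0%E ->
  shapiro_at (sublevel phi) x ->
  (forall z, ball x rho z -> (dist z (sublevel phi) <= tau%:E * maxe (phi z) 0)%E) ->
  star_estimate phi tau x.
Proof.
move=> tau0 rho0 Sx phix0 shx eb; apply: excess_le (ltW tau0) _.
  by exists 0; exact: bouligand0.
by move=> h; exact: dist_bouligand_le_of_hadamard tau0 rho0 Sx phix0 shx eb.
Qed.

Lemma star_estimate_near (phi : X -> \bar R) (xb : X) :
  shapiro_around (sublevel phi) xb -> local_error_bound phi xb ->
  exists tau r : R, 0 < tau /\ 0 < r /\
    forall x, sublevel phi x -> ball xb r x -> phi x = 0%E ->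
      star_estimate phi tau x.
Proof.
move=> [U /nbhs_ballP [r0 r00 r0U] shU] [tau [del [tau0 [del0 eb]]]].
have del20 : 0 < del / 2 by rewrite divr_gt0.
exists tau, (Num.min r0 (del / 2)); split => //; split; first by rewrite lt_min r00.
move=> x Sx xbx phix0.
apply: (star_estimate_of_error_bound tau0 del20 Sx phix0).
  by apply: shU => //; apply: r0U; apply: le_ball xbx; rewrite ge_min lexx.
move=> z xz; apply: eb; rewrite [del]splitr; apply: ball_triangle xz.
by apply: le_ball xbx; rewrite ge_min lexx orbT.
Qed.

End ContactToEstimate.

Section EstimateToErrorBound.
Variable R : realType.

Lemma sublevel_closed {X : topologicalType} (phi : X -> \bar R) :
  lower_semicontinuous phi -> closed (sublevel phi).
Proof.
move=> lsc; have -> : sublevel phi = ~` [set x | (0%:E < phi x)%E].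
  by apply/seteqP; split => x /=; rewrite /sublevel /= leNgt => /negP.
by apply: open_closedC; exact: (lower_semicontinuousP phi).1 lsc 0.
Qed.

Lemma local_error_bound_interior {X : normedModType R} (phi : X -> \bar R) (xb : X) :
  interior (sublevel phi) xb -> local_error_bound phi xb.
Proof.
move=> /nbhs_ballP [e e0 eS]; exists 1, e; split => //; split => // x /eS Sx.
apply: (le_trans (dist_le x Sx)); rewrite subrr normr0 mul1e.
by rewrite le_max lexx orbT.
Qed.

Section Tangent.
Variable X : normedModType R.
Implicit Types (phi : X -> \bar R) (w h : X).

(* Scaling the tangent direction [(h, b)] of the epigraph by [c^-1] makes it
   admissible in [star_estimate]. *)
Lemma star_estimate_epi_tangent phi w h (tau b c : R) :
  phi w = 0%E -> star_estimate phi tau w -> bouligand (epi phi) (w, 0) (h, b) ->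
  0 < c -> b <= c ->
  exists2 v, bouligand (sublevel phi) w v & `|h - v| < c * (tau + 1).
Proof.
move=> pw0 st T c0 bc; have ic0 : 0 < c^-1 by rewrite invr_gt0.
have Tc : bouligand (epi phi) (w, 0) (c^-1 *: h, c^-1 * b) := bouligandZ ic0 T.
have hc : (hadamard_lower phi w (c^-1 *: h) <= 1)%E.
  apply: le_trans (hadamard_lower_le_epi_tangent pw0 Tc) _.
  by rewrite lee_fin ler_pdivrMl // mulr1.
have : (dist (c^-1 *: h) (bouligand (sublevel phi) w) < (tau + 1)%:E)%E.
  apply: le_lt_trans (le_trans (dist_le_excess _ hc) st) _.
  by rewrite lte_fin ltrDl.
move=> /dist_N_lt_ex [v Tv hv]; exists (c *: v); first exact: bouligandZ.
have -> : h - c *: v = c *: (c^-1 *: h - v).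
  by rewrite scalerBr scalerA mulfV ?gt_eqF // scale1r.
by rewrite normrZ gtr0_norm // ltr_pM2l.
Qed.

(* With the factor [8] the estimates combine to
   [|y - w| <= (54/19) (tau + 1) a]. *)
Lemma ekeland_point_dist_le phi (y w h : X) (tau eta a b : R) :
  0 < tau -> 0 <= eta -> eta * (tau + 1) <= 8^-1 -> 0 < a ->
  phi w = 0%E -> star_estimate phi tau w ->
  (forall z, sublevel phi z -> `|y - w| <= `|y - z| + eta * `|z - w|) ->
  bouligand (epi phi) (w, 0) (h, b) ->
  `|y - w - h| + `|a - b| < eta * (`|y - w| + 2 * a) ->
  `|y - w| <= 3 * (tau + 1) * a.
Proof.
move=> tau0 eta0 etaT a0 pw0 st ek T.
set L := `|y - w|; set A := `|y - w - h|; set D := eta * (L + 2 * a) => yhb.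
have AD : A < D by have := normr_ge0 (a - b); lra.
have bD : b <= a + D.
  have : b - a <= `|a - b| by rewrite distrC ler_norm.
  by have : 0 <= A := normr_ge0 _; lra.
have L0 : 0 <= L := normr_ge0 _.
have D0 : 0 <= D by rewrite /D mulr_ge0 // addr_ge0 // mulr_ge0 // ltW.
have [v Tv hv] := star_estimate_epi_tangent pw0 st T (ltr_wpDr D0 a0) bD.
set H := `|h - v|.
have ekv : L <= `|y - w - v| + eta * `|v| := ekeland_point_bouligand eta0 ek Tv.
have yv : `|y - w - v| <= A + H := ler_distD h (y - w) v.
have vL : `|v| <= H + A + L.
  have := ler_distD h v 0; rewrite !subr0 [`|v - h|]distrC -/H.
  have := ler_distD (y - w) h 0; rewrite !subr0 [`|h - (y - w)|]distrC -/A -/L.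
  lra.
have eta8 : eta <= 8^-1 by apply: le_trans etaT; rewrite ler_peMr // lerDr ltW.
have etav : eta * `|v| <= (H + A + L) / 8.
  apply: le_trans (ler_wpM2l eta0 vL) _; rewrite mulrC ler_wpM2l //.
  by have : 0 <= A := normr_ge0 _; have : 0 <= H := normr_ge0 _; lra.
have DT : D * (tau + 1) <= (L + 2 * a) / 8.
  by rewrite /D mulrAC mulrC ler_wpM2l // addr_ge0 // mulr_ge0 // ltW.
have D8 : D <= (L + 2 * a) / 8.
  by rewrite /D mulrC ler_wpM2l // addr_ge0 // mulr_ge0 // ltW.
have aT : a <= a * (tau + 1) by have := mulr_gt0 a0 tau0; lra.
by move: hv; rewrite -/H mulrDl; lra.
Qed.

End Tangent.

Lemma local_error_bound_of_star_estimate {X : completeNormedModType R}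
    (phi : X -> \bar R) (xb : X) :
  lower_semicontinuous phi -> phi xb = 0%E ->
  bd (sublevel phi) `<=` [set x | phi x = 0%E] -> epi_shapiro_at phi xb ->
  (exists tau r : R, 0 < tau /\ 0 < r /\
    forall x, bd (sublevel phi) x -> ball xb r x -> star_estimate phi tau x) ->
  local_error_bound phi xb.
Proof.
move=> lsc pxb0 bd0 eS [tau [r [tau0 [r0 star]]]].
set S := sublevel phi; set eta := (8 * (tau + 1))^-1.
have Sxb : S xb by rewrite /S /sublevel /= pxb0.
have T0 : 0 < tau + 1 by rewrite addr_gt0.
have eta0 : 0 < eta by rewrite invr_gt0 mulr_gt0.
have etaT : eta * (tau + 1) = 8^-1.
  by rewrite /eta invfM -mulrA mulVf ?gt_eqF // mulr1.
have eta1 : eta < 1 by have := mulr_gt0 eta0 tau0; move: etaT; lra.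
have [d0 d00 shap] := shapiro_at_N_ex eS eta0; rewrite pxb0 /= in shap.
set rho := Num.min r d0 / 2.
have rho0 : 0 < rho by rewrite divr_gt0 // lt_min r0 d00.
have rhor : rho * 2 <= r by rewrite /rho divfK // ge_min lexx.
have rhod : rho * 2 <= d0 by rewrite /rho divfK // ge_min lexx orbT.
exists (3 * (tau + 1)), rho; split; first by rewrite mulr_gt0.
split => // y; rewrite -ball_normE /ball_ /= => xby.
have [Sy|nSy] := pselect (S y).
  apply: le_trans (dist_le y Sy) _; rewrite subrr normr0 mule_ge0 ?lee_fin //.
    by rewrite mulr_ge0 // ltW.
  by rewrite le_max lexx orbT.
case Ey : (phi y) => [a| |]; first last.
- by exfalso; apply: nSy; rewrite /S /sublevel /= Ey leNye.
- by rewrite (max_idPl (leey 0%E)) mulry gtr0_sg ?mulr_gt0 // mul1e leey.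
have a0 : 0 < a.
  by rewrite ltNge; apply/negP => a0; apply: nSy; rewrite /S /sublevel /= Ey lee_fin.
rewrite (max_idPl _) ?lee_fin ?(ltW a0) // -EFinM.
have [ad|ad] := leP (d0 / 2) a.
  apply: le_trans (dist_le y Sxb) _; rewrite lee_fin distrC.
  by have := mulr_gt0 a0 tau0; lra.
have ycont : continuous (fun z : X => `|y - z|).
  by move=> z; apply: cvg_norm; apply: cvgB; [exact: cvg_cst | exact: cvg_id].
have [w Sw [yw ek]] := ekeland_variational_principle (sublevel_closed lsc) ycont
  (fun z => normr_ge0 _) eta0 Sxb.
have xbw : `|xb - w| < rho * 2.
  by have := ler_distD y xb w; rewrite [`|y - xb|]distrC in yw; lra.
have bdw : bd S w := ekeland_point_bd eta1 Sw nSy ek.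
have stw : star_estimate phi tau w.
  apply: (star w); first exact: bdw.
  by rewrite -ball_normE /ball_ /=; lra.
have Ey' : epi phi (y, a) by rewrite /epi /= Ey.
have Ew : epi phi (w, 0) by rewrite /epi /= (bd0 _ bdw).
have yd : `|y - xb| + `|a - 0| < d0 by rewrite subr0 gtr0_norm // distrC; lra.
have wd : `|w - xb| + `|0 - 0 : R| < d0 by rewrite subr0 normr0 addr0 distrC; lra.
have [[h b] T hb] := shap (y, a) (w, 0) (eta * a) Ey' Ew yd wd (mulr_gt0 eta0 a0).
have hb' : `|y - w - h| + `|a - b| < eta * (`|y - w| + 2 * a).
  by move: hb; rewrite /= subr0 (gtr0_norm a0); lra.
apply: le_trans (dist_le y Sw) _; rewrite lee_fin.
by apply: ekeland_point_dist_le tau0 (ltW eta0) _ a0 (bd0 _ bdw) stw ek T hb';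
  rewrite etaT.
Qed.

End EstimateToErrorBound.

Theorem theorem4p1 (R : realType) (X : completeNormedModType R)
  (phi : X -> \bar R) (xb : X) :
  proper_fun phi -> lower_semicontinuous phi -> sublevel phi xb ->
  (* (i) *)
  ((shapiro_around (sublevel phi) xb -> local_error_bound phi xb ->
    exists tau r : R, 0 < tau /\ 0 < r /\
      forall x, sublevel phi x -> ball xb r x -> phi x = 0%E ->
        star_estimate phi tau x)
  /\
  (* (ii) *)
   (bd (sublevel phi) `<=` [set x | phi x = 0%E] ->
    epi_shapiro_at phi xb ->
    (exists tau r : R, 0 < tau /\ 0 < r /\
      forall x, bd (sublevel phi) x -> ball xb r x -> star_estimate phi tau x) ->
    local_error_bound phi xb)).
Proof.
move=> _ lsc Sxb; split; first exact: star_estimate_near.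
move=> bd0 eS st; have [pxb0|pxb] := eqVneq (phi xb) 0%E.
  exact: local_error_bound_of_star_estimate.
apply: local_error_bound_interior; apply: contrapT => nint.
by move/eqP: pxb; apply; apply: bd0; split; first exact: subset_closure.
Qed.
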